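(* A topological partial action is free if and only if its enveloping action is free.
   Context: A topological partial action $\tau=(\{Y_t\}_{t\in H},\{\tau_t\}_{t\in H})$ of a topological group $H$ on a space $Y$: open $Y_t\subseteq Y$, homeomorphisms $\tau_t\colon Y_{t^{-1}}\to Y_t$, $Y_e=Y$, $\tau_e=\mathrm{id}$, $\tau_s(Y_{s^{-1}}\cap Y_t)=Y_s\cap Y_{st}$, $\tau_s\tau_t=\tau_{st}$ on $Y_{t^{-1}}\cap Y_{t^{-1}s^{-1}}$, with $\{(t,y):y\in Y_{t^{-1}}\}$ open and $(t,y)\mapsto\tau_t(y)$ continuous. It is free if for all $t\neq e$ the set $\{y\in Y_{t^{-1}}:\tau_t(y)=y\}$ is empty (for a global action, $Y_t=Y$ for all $t$). The enveloping action $\tau^e$ is (up to isomorphism) the global action of $H$ on a space $Y^e$ such that $Y$ is open in $Y^e$, $Y_t=Y\cap\tau^e_t(Y)$, $\tau_t=\tau^e_t$ on $Y_{t^{-1}}$, and $Y^e=\bigcup_t\tau^e_t(Y)$. *)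

From HB Require Import structures.
From mathcomp Require Import all_boot all_algebra.
From mathcomp Require Import all_classical all_reals topology.
Set Implicit Arguments. Unset Strict Implicit. Unset Printing Implicit Defensive.
Local Open Scope classical_set_scope.

Definition is_topgroup (H : topologicalType) (mul : H -> H -> H)
  (inv : H -> H) (e : H) : Prop :=
  [/\ (forall a b c, mul a (mul b c) = mul (mul a b) c),
      (forall a, mul e a = a /\ mul a e = a),
      (forall a, mul (inv a) a = e /\ mul a (inv a) = e),
      continuous (fun p : H * H => mul p.1 p.2)
    & continuous inv].

(* Topological partial action ({D t}, {tau t}) of H on Y:
   D t is the domain Y_t, and tau t : Y_{t^-1} -> Y_t (its values outside
   Y_{t^-1} are irrelevant). *)
Definition partial_homeo (H Y : topologicalType) (inv : H -> H)
  (D : H -> set Y) (tau : H -> Y -> Y) (t : H) : Prop :=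
  [/\ (forall y, D (inv t) y -> D t (tau t y)),
      {within D (inv t), continuous (tau t)} &
      (exists g : Y -> Y, [/\ (forall y, D t y -> D (inv t) (g y)),
          (forall y, D (inv t) y -> g (tau t y) = y),
          (forall y, D t y -> tau t (g y) = y) &
          {within D t, continuous g}])].

Definition is_top_partial_action (H : topologicalType) (mul : H -> H -> H)
  (inv : H -> H) (e : H) (Y : topologicalType)
  (D : H -> set Y) (tau : H -> Y -> Y) : Prop :=
  [/\ (forall t, open (D t)) /\ (forall t, partial_homeo inv D tau t),
      D e = setT /\ (forall y, tau e y = y),
      (forall s t, tau s @` (D (inv s) `&` D t) = D s `&` D (mul s t)),
      (forall s t y, D (inv t) y -> D (mul (inv t) (inv s)) y ->
          tau s (tau t y) = tau (mul s t) y)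
    & (open [set p : H * Y | D (inv p.1) p.2] /\
       {within [set p : H * Y | D (inv p.1) p.2],
        continuous (fun p : H * Y => tau p.1 p.2)})].

Definition is_top_action (H : topologicalType) (mul : H -> H -> H)
  (e : H) (Z : topologicalType) (sigma : H -> Z -> Z) : Prop :=
  [/\ (forall z, sigma e z = z),
      (forall s t z, sigma s (sigma t z) = sigma (mul s t) z)
    & continuous (fun p : H * Z => sigma p.1 p.2)].

Definition partial_free (H Y : Type) (inv : H -> H) (e : H)
  (D : H -> set Y) (tau : H -> Y -> Y) : Prop :=
  forall t, t <> e -> forall y, D (inv t) y -> tau t y <> y.

Definition global_free (H Z : Type) (e : H) (sigma : H -> Z -> Z) : Prop :=
  forall t, t <> e -> forall z, sigma t z <> z.

(* (Z, sigma) together with the open embedding iota : Y -> Z is an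
   enveloping action of the partial action (D, tau): Y is identified with the
   open subset iota(Y) of Z, Y_t = Y ∩ sigma_t(Y), tau_t = sigma_t on
   Y_{t^-1}, and Z = ⋃_t sigma_t(Y). *)
Definition is_enveloping_action (H : topologicalType) (mul : H -> H -> H)
  (inv : H -> H) (e : H) (Y : topologicalType)
  (D : H -> set Y) (tau : H -> Y -> Y)
  (Z : topologicalType) (sigma : H -> Z -> Z) (iota : Y -> Z) : Prop :=
  [/\ is_top_action mul e sigma,
      [/\ injective iota, continuous iota &
         (forall U : set Y, open U -> open (iota @` U))],
      (forall t, iota @` D t = range iota `&` sigma t @` range iota),
      (forall t y, D (inv t) y -> sigma t (iota y) = iota (tau t y))
    & (forall z, exists t y, z = sigma t (iota y))].

(** A fixed point of [sigma t] in the enveloping space can be moved into the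
    copy of [Y] by a translation [sigma s]; it is then fixed by the conjugate
    [s^-1 t s], which is nontrivial when [t] is.  A point [y] of [Y] fixed by
    [sigma u] is also fixed by [sigma u^-1], so it lies in
    [Y cap sigma u^-1 (Y) = Y_(u^-1)] and is a fixed point of [tau u].  Conversely
    the partial action is the restriction of the global one. *)
From mathcomp Require Import all_boot all_algebra.
From mathcomp Require Import all_classical all_reals topology.
Set Implicit Arguments. Unset Strict Implicit. Unset Printing Implicit Defensive.
Local Open Scope classical_set_scope.

Section GroupLaw.
Variables (H : Type) (mul : H -> H -> H) (inv : H -> H) (e : H).
Hypothesis mulA : forall a b c, mul a (mul b c) = mul (mul a b) c.
Hypothesis mul1g : forall a, mul e a = a.
Hypothesis mulg1 : forall a, mul a e = a.
Hypothesis mulgV : forall a, mul a (inv a) = e.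

Lemma conj_eq1 (s t : H) : mul (inv s) (mul t s) = e -> t = e.
Proof.
move=> conj1.
have ts : mul t s = s.
  by rewrite -[LHS]mul1g -(mulgV s) -mulA conj1 mulg1.
by rewrite -[t]mulg1 -(mulgV s) mulA ts.
Qed.

End GroupLaw.

Section GlobalAction.
Variables (H Z : Type) (mul : H -> H -> H) (inv : H -> H) (e : H).
Variable sigma : H -> Z -> Z.
Hypothesis act1 : forall z, sigma e z = z.
Hypothesis actM : forall s t z, sigma s (sigma t z) = sigma (mul s t) z.
Hypothesis mulVg : forall a, mul (inv a) a = e.

Lemma act_fix_inv (u : H) (z : Z) : sigma u z = z -> sigma (inv u) z = z.
Proof. by move=> fix_z; rewrite -{1}fix_z actM mulVg act1. Qed.

Lemma act_fix_conj (s t : H) (w : Z) :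
  sigma t (sigma s w) = sigma s w -> sigma (mul (inv s) (mul t s)) w = w.
Proof. by move=> fix_sw; rewrite -!actM fix_sw actM mulVg act1. Qed.

End GlobalAction.

Section Envelope.
Variables (H Y Z : Type) (inv : H -> H).
Variables (D : H -> set Y) (tau : H -> Y -> Y).
Variables (sigma : H -> Z -> Z) (iota : Y -> Z).
Hypothesis iota_inj : injective iota.
Hypothesis iota_dom : forall t, iota @` D t = range iota `&` sigma t @` range iota.
Hypothesis sigma_tau : forall t y, D (inv t) y -> sigma t (iota y) = iota (tau t y).

Lemma envelope_fix_dom (u : H) (y : Y) :
  sigma (inv u) (iota y) = iota y -> D (inv u) y.
Proof.
move=> fix_y.
have : (range iota `&` sigma (inv u) @` range iota) (iota y).
  by split; [exists y | exists (iota y); [exists y |]].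
by rewrite -iota_dom => -[y' Dy' /iota_inj <-].
Qed.

Lemma envelope_fix_partial (u : H) (y : Y) :
  D (inv u) y -> sigma u (iota y) = iota y -> tau u y = y.
Proof. by move=> Dy fix_y; apply: iota_inj; rewrite -sigma_tau. Qed.

End Envelope.

Theorem proposition3p3 (H : topologicalType) (mul : H -> H -> H)
  (inv : H -> H) (e : H) (hH : is_topgroup mul inv e)
  (Y : topologicalType) (D : H -> set Y) (tau : H -> Y -> Y)
  (htau : is_top_partial_action mul inv e D tau)
  (Z : topologicalType) (sigma : H -> Z -> Z) (iota : Y -> Z)
  (henv : is_enveloping_action mul inv e D tau sigma iota) :
  partial_free inv e D tau <-> global_free e sigma.
Proof.
case: hH => mulA unit invax _ _.
have mul1g a := (unit a).1; have mulg1 a := (unit a).2.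
have mulVg a := (invax a).1; have mulgV a := (invax a).2.
case: henv => [[act1 actM _] [iota_inj _ _] iota_dom sigma_tau cover].
split=> [pfree t t_neq1 z fix_z | gfree t t_neq1 y Dy fix_y].
- have [s [y z_def]] := cover z; subst z.
  set u := mul (inv s) (mul t s).
  have fix_y : sigma u (iota y) = iota y := act_fix_conj act1 actM mulVg fix_z.
  have u_neq1 : u <> e by move/(conj_eq1 mulA mul1g mulg1 mulgV).
  have Dy : D (inv u) y :=
    envelope_fix_dom iota_inj iota_dom (act_fix_inv act1 actM mulVg fix_y).
  exact: pfree u u_neq1 y Dy (envelope_fix_partial iota_inj sigma_tau Dy fix_y).
- by apply: (gfree t t_neq1 (iota y)); rewrite sigma_tau // fix_y.
Qed.
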